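(* Let $m\ge2$, $n$ be integers and $k$ an integer with $1\le k\le n^2-3n+2$, written $k=(n-1)q+r$ with $q\ge0$, $1\le r\le n-1$. Let $M_1=(\mu_{ij})$ be the $n\times n$ $0/1$ matrix with $\mu_{1,n-1}=\mu_{1,n}=1$, $\mu_{i,i-1}=1$ for $2\le i\le n$, all other entries $0$. Let $\mathbb{A}_0$ be the order $m$, dimension $n$ tensor with $(\mathbb{A}_0)_{ij\ldots j}=\mu_{ij}$ and all entries with $i_2,\ldots,i_m$ not all equal equal to $0$. Let $\mathbb{A}_k=(a^{(k)}_{i_1\ldots i_m})$ be the order $m$, dimension $n$ tensor with $a^{(k)}_{ij\ldots j}=\mu_{ij}$; $a^{(k)}_{ii_2\ldots i_m}=1$ whenever $i\in[n]\setminus\{r-q,\ldots,r,r+1\}\pmod n$ and the set of distinct values among $i_2,\ldots,i_m$ equals $\{r-q-1,r\}\pmod n$; and all other entries $0$. Then for every integer $t$ with $1\le t\le k$ and every $j\in\{1,2,\ldots,n-2\}\cup\{n\}$, $S_t(\mathbb{A}_k,j)=S_t(\mathbb{A}_0,j)$.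
   Context: For an integer $a$, $|a|_n$ is the least positive integer congruent to $a$ modulo $n$, and $\{a_1,\ldots,a_s\}\pmod n$ means $\{|a_1|_n,\ldots,|a_s|_n\}$. General product of dimension-$n$ tensors: for $\mathbb{A}$ of order $m\ge2$ and $\mathbb{B}$ of order $k\ge1$, $(\mathbb{A}\mathbb{B})_{i\alpha_1\ldots\alpha_{m-1}}=\sum_{i_2,\ldots,i_m=1}^n a_{ii_2\ldots i_m}b_{i_2\alpha_1}\cdots b_{i_m\alpha_{m-1}}$ ($\alpha_l\in[n]^{k-1}$); it is associative and $\mathbb{A}^k$ is the $k$-fold power. $(M(\mathbb{C}))_{ij}=c_{ij\ldots j}$ is the majorization matrix. For $j\in[n]$, $k\ge1$: $S_k(\mathbb{A},j)=\{u\in[n]\mid (M(\mathbb{A}^k))_{uj}>0\}$. *)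

From mathcomp Require Import all_boot all_order all_algebra.
Set Implicit Arguments. Unset Strict Implicit. Unset Printing Implicit Defensive.

(* A tensor of dimension n (with nonnegative integer entries): entry
   T i [:: i2; ...; ip] for an order-p tensor (the tail has length p-1).
   Indices are 0-based: 'I_n stands for [n] = {1,...,n} via v |-> v+1. *)
Definition tensor (n : nat) := 'I_n -> seq 'I_n -> nat.

(* General product A B, A of order m, B of order k:
   (AB)_{i alpha_1 ... alpha_{m-1}} = sum_{i2..im} a_{i i2..im} b_{i2 alpha_1} ... b_{im alpha_{m-1}},
   where the tail s (of length (m-1)(k-1)) is split into m-1 blocks of length k-1. *)
Definition tprod (n m k : nat) (A B : tensor n) : tensor n :=
  fun i s => \sum_(t : (m-1).-tuple 'I_n)
     A i t * \prod_(l < m-1) B (tnth t l) (take (k-1) (drop (l * (k-1)) s)).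

(* order of A^(t+1) when A has order m *)
Fixpoint pow_order (m t : nat) : nat :=
  match t with 0 => m | t'.+1 => (m-1) * (pow_order m t' - 1) + 1 end.

(* tpow' m A t = A^(t+1) *)
Fixpoint tpow' (n m : nat) (A : tensor n) (t : nat) : tensor n :=
  match t with
  | 0 => A
  | t'.+1 => tprod m (pow_order m t') A (tpow' m A t')
  end.

(* A^t for t >= 1, of order pow_order m t.-1 *)
Definition tpow (n m : nat) (A : tensor n) (t : nat) : tensor n := tpow' m A t.-1.

Definition majorization (n p : nat) (C : tensor n) : 'I_n -> 'I_n -> nat :=
  fun i j => C i (nseq (p-1) j).

Definition S_set (n m : nat) (A : tensor n) (t : nat) (j : 'I_n) : {set 'I_n} :=
  [set u : 'I_n | 0 < majorization (pow_order m t.-1) (tpow m A t) u j].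

(* mu_{ij}, 1-based indices *)
Definition mu (n i j : nat) : bool :=
  ((i == 1) && ((j == n - 1) || (j == n))) || ((2 <= i <= n) && (j == i - 1)).

(* 0-based index of |x|_n, i.e. |x|_n - 1 = (x - 1) mod n *)
Definition res0 (n : nat) (x : int) : nat := `|((x - 1) %% n)%Z|%N.

Definition A0 (n : nat) : tensor n :=
  fun i s => match s with
             | x :: _ => if all (pred1 x) s then nat_of_bool (mu n i.+1 x.+1) else 0
             | [::] => 0
             end.

Definition in_window (n q r : nat) (i : 'I_n) : bool :=
  has (fun d => res0 n (r%:Z - q%:Z + d%:Z)%R == val i) (iota 0 (q + 2)).

Definition values_eq2 (n : nat) (s : seq 'I_n) (a b : nat) : bool :=
  all (fun x => (val x == a) || (val x == b)) s &&
  (a \in map val s) && (b \in map val s).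

Definition Ak (n q r : nat) : tensor n :=
  fun i s => match s with
             | x :: _ =>
               if all (pred1 x) s then nat_of_bool (mu n i.+1 x.+1)
               else nat_of_bool (~~ in_window q r i &&
                      values_eq2 s (res0 n (r%:Z - q%:Z - 1)%R) (res0 n r%:Z))
             | [::] => 0
             end.

From mathcomp Require Import all_boot all_order all_algebra.
From mathcomp Require Import zify.
Set Implicit Arguments. Unset Strict Implicit. Unset Printing Implicit Defensive.

(* Both tensors have majorization matrix M_1, and the off-diagonal entries of
   A_0 vanish, so u lies in S_{t+1}(A_0, j) exactly when S_t(A_0, j) contains
   u-1 (for u > 1), resp. n-1 or n (for u = 1). For j <> n-1 these
   sets are cyclic intervals of Z/n whose right end moves forward by one per step
   through 1, ..., n-1, the interval gaining one element whenever the end wraps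
   around. A_k can only add vertices u outside the window {r-q, ..., r+1} when
   both r-q-1 and r lie in S_t. As long as t < k the interval is too short to
   contain both except by covering the complement of the window, and then the
   predecessor of u already lies in S_t(A_0, j); so the two sequences of sets
   never separate. *)

Lemma sum_nat_gt0P (I : finType) (F : I -> nat) :
  reflect (exists i, 0 < F i) (0 < \sum_(i : I) F i).
Proof.
rewrite lt0n sum_nat_eq0; apply: (iffP forallPn) => -[i Fi]; exists i.
  by rewrite lt0n.
by rewrite -lt0n.
Qed.

Section TensorPowers.
Variables (n m : nat).
Implicit Types (A : tensor n) (j u : 'I_n).

Lemma S_set1 A j : S_set m A 1 j = [set u | 0 < A u (nseq (m - 1) j)].
Proof. by apply/setP => u; rewrite !inE. Qed.

Lemma S_setS A t j u : 0 < t ->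
  (u \in S_set m A t.+1 j) =
  [exists s : (m - 1).-tuple 'I_n,
     (0 < A u s) && [forall l, tnth s l \in S_set m A t j]].
Proof.
case: t => // t _; rewrite !inE /majorization /tpow /= addnK /tprod.
set p := pow_order m t - 1.
have block_nseq (l : 'I_(m - 1)) :
    take p (drop (l * p) (nseq ((m - 1) * p) j)) = nseq p j.
  rewrite drop_nseq take_nseq // -mulnBl leq_pmull //; have := ltn_ord l; lia.
apply/sum_nat_gt0P/existsP => -[s Hs]; exists s.
  move: Hs; rewrite muln_gt0 => /andP[-> /= Hprod].
  by apply/forallP => l; rewrite inE /majorization -(block_nseq l) (gt0_prodn Hprod).
case/andP: Hs => As /forallP Hs; rewrite muln_gt0 As; apply: prodn_gt0 => l.
by move: (Hs l); rewrite inE /majorization block_nseq.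
Qed.

End TensorPowers.

Definition mu_step (n : nat) (S : {set 'I_n}) : {set 'I_n} :=
  [set u : 'I_n | [exists x in S, mu n u.+1 x.+1]].

Definition mu_diagonal (n m : nat) (A : tensor n) : Prop :=
  forall (u x : 'I_n), A u (nseq (m - 1) x) = mu n u.+1 x.+1.

Section MuDiagonal.
Variables (n m : nat).
Hypothesis m_ge2 : 2 <= m.
Implicit Types (A : tensor n) (j u : 'I_n).

Lemma nseq_predm (x : 'I_n) : nseq (m - 1) x = x :: nseq (m - 2) x.
Proof. by have -> : m - 1 = (m - 2).+1 by lia. Qed.

Lemma A0_mu_diagonal : mu_diagonal m (@A0 n).
Proof. by move=> u x; rewrite nseq_predm /A0 -nseq_predm all_pred1_nseq. Qed.

Lemma Ak_mu_diagonal q r : mu_diagonal m (@Ak n q r).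
Proof. by move=> u x; rewrite nseq_predm /Ak -nseq_predm all_pred1_nseq. Qed.

Lemma S_set1_mu_diagonal A j :
  mu_diagonal m A -> S_set m A 1 j = [set u : 'I_n | mu n u.+1 j.+1].
Proof. by move=> Adiag; apply/setP => u; rewrite S_set1 !inE Adiag; case: mu. Qed.

Lemma mu_step_sub_S_setS A t j : mu_diagonal m A -> 0 < t ->
  mu_step (S_set m A t j) \subset S_set m A t.+1 j.
Proof.
move=> Adiag t_gt0; apply/subsetP => u; rewrite inE => /existsP[x /andP[Sx mu_ux]].
rewrite S_setS //; apply/existsP; exists [tuple of nseq (m - 1) x].
by rewrite /= Adiag mu_ux; apply/forallP => l; rewrite tnth_nseq.
Qed.

Lemma S_set_A0S t j : 0 < t ->
  S_set m (@A0 n) t.+1 j = mu_step (S_set m (@A0 n) t j).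
Proof.
move=> t_gt0; apply/eqP; rewrite eqEsubset mu_step_sub_S_setS ?andbT //;
  last exact: A0_mu_diagonal.
apply/subsetP => u; rewrite S_setS // => /existsP[[[|x s] sz]] //.
rewrite /A0 /=; case: ifP => // _; case mu_ux: mu => // /= /forallP Ss.
have /tnthP[l x_l] : x \in Tuple sz := mem_head x s.
by rewrite inE; apply/existsP; exists x; rewrite mu_ux andbT x_l Ss.
Qed.

Lemma S_set_AkS q r t j : 0 < t ->
  S_set m (@Ak n q r) t.+1 j \subset
  mu_step (S_set m (@Ak n q r) t j) :|:
  [set u | ~~ in_window q r u &&
     [exists x in S_set m (@Ak n q r) t j, val x == res0 n (r%:Z - q%:Z - 1)%R] &&
     [exists x in S_set m (@Ak n q r) t j, val x == res0 n r%:Z]].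
Proof.
move=> t_gt0; set S := S_set m _ t j; apply/subsetP => u.
rewrite S_setS // => /existsP[[[|x s] sz]] //= /andP[Aus /forallP Ss].
have mem_S y : y \in Tuple sz -> y \in S by move=> /tnthP[l ->]; apply: Ss.
rewrite !inE; move: Aus; rewrite /Ak /=; case: ifP => _.
  case mu_ux: mu => // _; apply/orP; left.
  by apply/existsP; exists x; rewrite mu_ux mem_S ?mem_head.
case: in_window => //=; rewrite lt0b /values_eq2.
case/andP => /andP[_ /mapP[y Sy ->]] /mapP[z Sz ->]; apply/orP; right.
by apply/andP; split; apply/existsP; [exists y | exists z]; rewrite mem_S ?eqxx.
Qed.

End MuDiagonal.

(* [cyc_mem n c p v]: for [c, v < n], the residue [v] is one of [c - p, ..., c] modulo [n]. *)
Definition cyc_mem (n c p v : nat) : bool :=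
  (v <= c <= v + p) || (c < v) && (c + n <= v + p).

Definition mu_interval (n N : nat) : {set 'I_n} :=
  [set u : 'I_n | cyc_mem n (N %% (n - 1)) (N %/ (n - 1)) u].

Definition mu_start (n : nat) (j : 'I_n) : nat := if j.+1 == n then 0 else j.+1.

Section MuIntervals.
Variable n : nat.
Hypothesis n_gt1 : 1 < n.

Lemma mu_step_setE (P : nat -> bool) (u : 'I_n) :
  (u \in mu_step [set x : 'I_n | P x]) =
  if u == 0 :> nat then P (n - 2) || P (n - 1) else P (u - 1).
Proof.
have mu_u (x : 'I_n) : mu n u.+1 x.+1 =
    if u == 0 :> nat then (x == n - 2 :> nat) || (x == n - 1 :> nat)
    else x == u - 1 :> nat.
  rewrite /mu; have := ltn_ord u; have := ltn_ord x.
  by case: ifP => /eqP u0 x_lt u_lt; apply/idP/idP; lia.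
rewrite inE; apply/existsP/idP => [[x /andP[]]|].
  by rewrite inE mu_u; case: ifP => _ Px => [/orP[]|] /eqP <-; rewrite Px ?orbT.
have u_lt := ltn_ord u; case: ifP => u0 => [/orP[] Pk|Pk].
- have k_lt : n - 2 < n by lia.
  by exists (Ordinal k_lt); rewrite inE mu_u u0 eqxx Pk.
- have k_lt : n - 1 < n by lia.
  by exists (Ordinal k_lt); rewrite inE mu_u u0 eqxx orbT Pk.
- have k_lt : u - 1 < n by lia.
  by exists (Ordinal k_lt); rewrite inE mu_u u0 eqxx Pk.
Qed.

Lemma mu_intervalE p c : c < n - 1 ->
  mu_interval n (p * (n - 1) + c) = [set u : 'I_n | cyc_mem n c p u].
Proof.
move=> c_lt; have n1_gt0 : 0 < n - 1 by lia.
by apply/setP => u; rewrite !inE modnMDl modn_small // divnMDl // divn_small ?addn0.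
Qed.

Lemma mu_step_interval N : mu_step (mu_interval n N) = mu_interval n N.+1.
Proof.
have n1_gt0 : 0 < n - 1 by lia.
rewrite [in LHS](divn_eq N (n - 1)); set p := N %/ _; set c := N %% _.
have c_lt : c < n - 1 by apply: ltn_pmod.
have [p' [c' [-> c'_lt next]]] : exists p' c', [/\ N.+1 = p' * (n - 1) + c', c' < n - 1 &
    c = n - 2 /\ p' = p.+1 /\ c' = 0 \/ c < n - 2 /\ p' = p /\ c' = c.+1].
  rewrite {1}(divn_eq N (n - 1)) -/p -/c.
  have [c_max | c_lt'] := eqVneq c (n - 2); [exists p.+1, 0 | exists p, c.+1];
    by rewrite ?mulSn; split; lia.
rewrite !mu_intervalE //; apply/setP => u; rewrite mu_step_setE inE.
by have := ltn_ord u; case: ifP; rewrite /cyc_mem; lia.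
Qed.

End MuIntervals.

Lemma S_set_A0_interval n m (j : 'I_n) t : 1 < n -> 2 <= m ->
  (j.+1 <= n - 2) || (j.+1 == n) -> 0 < t ->
  S_set m (@A0 n) t j = mu_interval n (mu_start j + t.-1).
Proof.
move=> n_gt1 m_ge2 j_ok; have j_lt := ltn_ord j.
elim: t => // -[_ _ | t IH _].
  rewrite S_set1_mu_diagonal //; last exact: A0_mu_diagonal.
  rewrite addn0 -[mu_start j]/(0 * (n - 1) + mu_start j) mu_intervalE //;
    last by rewrite /mu_start; case: ifP; lia.
  apply/setP => u; rewrite !inE /mu /mu_start /cyc_mem.
  by have := ltn_ord u; case: ifP => /eqP; lia.
by rewrite S_set_A0S // IH // mu_step_interval // addnS.
Qed.

Lemma res0E (n w : nat) (b z : int) :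
  w < n -> z = (w%:Z + 1 + b * n%:Z)%R -> res0 n z = w.
Proof.
move=> w_lt ->; rewrite /res0.
have -> : (w%:Z + 1 + b * n%:Z - 1 = b * n%:Z + w%:Z)%R by lia.
by rewrite modzMDl modz_small //; lia.
Qed.

Lemma cyc_mem_in_window n q r (u : 'I_n) : cyc_mem n r q.+1 u -> in_window q r u.
Proof.
have u_lt := ltn_ord u; rewrite /cyc_mem => /orP[] u_win; apply/hasP.
- exists (u + q.+1 - r); first by rewrite mem_iota; lia.
  by apply/eqP => /=; apply: (res0E (b := 0)) => //; lia.
- exists (u + q.+1 - r - n); first by rewrite mem_iota; lia.
  by apply/eqP => /=; apply: (res0E (b := -1)) => //; lia.
Qed.

Lemma res0_window_ends n q r : q + 3 <= n -> 0 < r < n ->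
  res0 n r%:Z = r - 1 /\
  (res0 n (r%:Z - q%:Z - 1)%R + q.+2 = r \/ res0 n (r%:Z - q%:Z - 1)%R + q.+2 = r + n).
Proof.
move=> q_lt r_bd; split; first by apply: (res0E (b := 0)); lia.
have [q_le | q_gt] := leqP q.+2 r.
  by left; rewrite (res0E (w := r - q.+2) (b := 0)) //; lia.
by right; rewrite (res0E (w := r + n - q.+2) (b := -1)) //; lia.
Qed.

Lemma cyc_mem_pred n q r p c a u :
  q + 3 <= n -> 0 < r < n -> c < n - 1 -> (p <= q \/ p = q.+1 /\ c + 3 <= r) ->
  a < n -> (a + q.+2 = r \/ a + q.+2 = r + n) ->
  cyc_mem n c p a -> cyc_mem n c p (r - 1) ->
  u < n -> ~~ cyc_mem n r q.+1 u ->
  cyc_mem n c p (if u == 0 then n - 1 else u - 1).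
Proof.
rewrite /cyc_mem => q_lt r_bd c_lt p_bd a_lt a_def a_in b_in u_lt u_out.
by case: ifP => /eqP u0; case: p_bd a_def => [?|[??]] [?|?]; lia.
Qed.

Lemma mu_step_interval_window n q r N (u x y : 'I_n) :
  q + 3 <= n -> 0 < r < n -> N + 3 <= q.+1 * (n - 1) + r ->
  x \in mu_interval n N -> val x = res0 n (r%:Z - q%:Z - 1)%R ->
  y \in mu_interval n N -> val y = res0 n r%:Z ->
  ~~ in_window q r u -> u \in mu_step (mu_interval n N).
Proof.
move=> q_lt r_bd N_bd Ix x_def Iy y_def u_out.
have [b_def a_def] := res0_window_ends q_lt r_bd.
have n1_gt0 : 0 < n - 1 by lia.
move: N_bd Ix Iy; rewrite (divn_eq N (n - 1)); set p := N %/ _; set c := N %% _.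
have c_lt : c < n - 1 by apply: ltn_pmod.
have n_gt1 : 1 < n by lia.
move=> N_bd; rewrite mu_intervalE // (mu_step_setE n_gt1 (cyc_mem n c p)) !inE.
have p_bd : p <= q \/ p = q.+1 /\ c + 3 <= r.
  have [p_le | p_gt] := leqP p q.+1; last first.
    by have := leq_mul p_gt (leqnn (n - 1)); lia.
  by have [p_eq|] := eqVneq p q.+1; [right; move: N_bd; rewrite p_eq | left]; lia.
move=> a_in; have -> : (y : nat) = r - 1 by rewrite -b_def -y_def.
rewrite -[res0 n _]x_def in a_def => b_in.
have := cyc_mem_pred q_lt r_bd c_lt p_bd (ltn_ord x) a_def a_in b_in (ltn_ord u).
move=> /(_ (contra (@cyc_mem_in_window n q r u) u_out)).
by case: ifP => // _ ->; rewrite orbT.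
Qed.

Theorem proposition3p2 (m n k q r : nat) :
  2 <= m ->
  1 <= k -> k <= (n - 1) * (n - 2) ->
  k = (n - 1) * q + r -> 1 <= r -> r <= n - 1 ->
  forall t : nat, 1 <= t -> t <= k ->
  forall j : 'I_n, (j.+1 <= n - 2) || (j.+1 == n) ->
  S_set m (@Ak n q r) t j = S_set m (@A0 n) t j.
Proof.
move=> m_ge2 k_gt0 k_le k_def r_gt0 r_lt t t_gt0 t_le j j_ok.
have n_ge3 : 3 <= n by nia.
have q_lt : q + 3 <= n.
  have : (n - 1) * q < (n - 1) * (n - 2) by lia.
  by rewrite ltn_pmul2l; lia.
elim: t t_gt0 t_le => // -[_ _ _ | t IH _ t_le].
  by rewrite !S_set1_mu_diagonal //; [exact: A0_mu_diagonal | exact: Ak_mu_diagonal].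
have IHt := IH isT (ltnW t_le).
apply/eqP; rewrite eqEsubset S_set_A0S // -IHt mu_step_sub_S_setS // ?andbT;
  last exact: Ak_mu_diagonal.
apply: subset_trans (S_set_AkS m q r j _) _ => //.
rewrite subUset subxx /= IHt S_set_A0_interval ?(ltnW n_ge3) //.
apply/subsetP => u; rewrite inE => /andP[/andP[u_out /existsP[x /andP[Ix /eqP x_def]]]].
move=> /existsP[y /andP[Iy /eqP y_def]].
apply: (mu_step_interval_window q_lt _ _ Ix x_def Iy y_def u_out); first by lia.
by rewrite /mu_start; case: ifP; lia.
Qed.
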